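(* Let $G$ be any graph with $n$ nodes and consider the balancing circuit model or the random matching model. Let $x^{(0)}$ be any non-negative integer load vector with $\| x^{(0)} \|_{1} \leq n^{1-\epsilon}$, where $\epsilon > 0$ is a constant. Then the discrepancy after $\tau_{\operatorname{cont}}(1,n^{-1})$ rounds is at most $9/\epsilon$ with probability at least $1-2 n^{-1}$.
   Context: A matching $\mathbf{M}^{(t)}\subseteq E$ of $G=(V,E)$ is identified with the symmetric matrix with entries $1/2$ on $(u,u),(v,v),(u,v),(v,u)$ for $\{u,v\}\in\mathbf{M}^{(t)}$, $1$ on the diagonal for unmatched nodes, $0$ elsewhere. Discrete protocol: for each $\{u,v\}\in\mathbf{M}^{(t)}$ both nodes get $\lfloor (x^{(t-1)}_u+x^{(t-1)}_v)/2\rfloor$ tokens and the excess token (if the sum is odd) goes to $u$ or $v$ with probability $1/2$ each, independently; unmatched nodes keep their load. Continuous process: $\xi^{(t)}=\xi^{(t-1)}\mathbf{M}^{(t)}$. Balancing circuit model: $d$ fixed matchings applied periodically. Random matching model: a random matching each round, independent across rounds, each edge present with probability at least $p_{\min}=\Omega(1/\Delta)$, $\Delta$ the maximum degree. Discrepancy: $\max_{u,v}|x_u-x_v|$. $[t_1,t_2]$ is $(K,\epsilon)$-smoothing if every $\xi^{(t_1)}\in\mathbb{R}^n$ of discrepancy at most $K$ gives $\xi^{(t_2)}$ of discrepancy at most $\epsilon$. $\tau_{\operatorname{cont}}(K,\epsilon)$ is the minimum $t$ with $[0,t]$ $(K,\epsilon)$-smoothing (balancing circuit), resp. the minimum $t$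 such that $[0,t]$ is $(K,\epsilon)$-smoothing with probability at least $1-n^{-1}$ (random matching). *)

From HB Require Import structures.
From mathcomp Require Import all_boot all_order all_algebra.
From mathcomp Require Import boolp reals exp.
Set Implicit Arguments. Unset Strict Implicit. Unset Printing Implicit Defensive.
Import Order.TTheory GRing.Theory Num.Theory.
Local Open Scope ring_scope.

Definition simple_graph (n : nat) (e : rel 'I_n) : Prop :=
  (forall u v, e u v = e v u) /\ (forall u, ~~ e u u).

Definition is_matching (n : nat) (e : rel 'I_n) (M : {set {set 'I_n}}) : Prop :=
  (forall s, s \in M -> exists u v, [/\ u != v, e u v & s = [set u; v]]) /\
  (forall s t, s \in M -> t \in M -> s != t -> [disjoint s & t]).

Definition matched (n : nat) (M : {set {set 'I_n}}) (u : 'I_n) : bool :=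
  [exists s in M, u \in s].

Definition mmat (R : numFieldType) (n : nat) (M : {set {set 'I_n}}) : 'M[R]_n :=
  \matrix_(u, v) (if u == v then (if matched M u then 2^-1 else 1)
                  else (if [set u; v] \in M then 2^-1 else 0)).

Definition partner (n : nat) (M : {set {set 'I_n}}) (u : 'I_n) : 'I_n :=
  if [pick v | (v != u) && ([set u; v] \in M)] is Some v then v else u.

(* One round of the discrete protocol.  [c] gives one fair coin per node;
   for an edge {u,v} the coin of the smaller endpoint decides: if it is
   true the excess token goes to the smaller endpoint, else to the larger. *)
Definition dstep (n : nat) (M : {set {set 'I_n}}) (c : 'I_n -> bool)
  (x : 'I_n -> nat) : 'I_n -> nat :=
  fun u => let v := partner M u in
    if v == u then x u
    else let s := (x u + x v)%N in
         (s./2 + (odd s && (c (if (u < v)%N then u else v) == (u < v)%N)))%N.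

(* Discrete process: [sched t] is the matching M^(t) of round t >= 1,
   [coins t] the coins used in round t. *)
Fixpoint drun (n : nat) (sched : nat -> {set {set 'I_n}})
  (coins : nat -> 'I_n -> bool) (x0 : 'I_n -> nat) (t : nat) : 'I_n -> nat :=
  match t with
  | 0 => x0
  | t'.+1 => dstep (sched t'.+1) (coins t'.+1) (drun sched coins x0 t')
  end.

Fixpoint prodM (R : numFieldType) (n : nat) (sched : nat -> {set {set 'I_n}})
  (t1 k : nat) : 'M[R]_n :=
  match k with
  | 0 => 1%:M
  | k'.+1 => prodM R sched t1 k' *m mmat R (sched (t1 + k'.+1)%N)
  end.

Definition disc (R : realFieldType) (n : nat) (x : 'rV[R]_n) : R :=
  \big[Num.max/0]_(u < n) \big[Num.max/0]_(v < n) `|x ord0 u - x ord0 v|.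

Definition discn (n : nat) (x : 'I_n -> nat) : nat :=
  \max_(u < n) \max_(v < n) (x u - x v)%N.

Definition smoothing (R : realFieldType) (n : nat) (sched : nat -> {set {set 'I_n}})
  (t1 t2 : nat) (K eps : R) : Prop :=
  forall xi : 'rV[R]_n, disc xi <= K ->
    disc (xi *m prodM R sched t1 (t2 - t1)) <= eps.

Definition bc_sched (n : nat) (Ms : seq {set {set 'I_n}}) (t : nat) : {set {set 'I_n}} :=
  nth set0 Ms ((t.-1) %% size Ms).

Definition is_tau_cont (R : realFieldType) (n : nat) (sched : nat -> {set {set 'I_n}})
  (K eps : R) (T : nat) : Prop :=
  smoothing sched 0 T K eps /\ (forall t, (t < T)%N -> ~ smoothing sched 0 t K eps).

(* Schedule / coins of rounds 1..T from finite functions indexed by 'I_T. *)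
Definition sched_of (n T : nat) (Ms : {ffun 'I_T -> {set {set 'I_n}}}) (t : nat)
  : {set {set 'I_n}} :=
  if insub (t.-1) is Some i then Ms i else set0.

Definition coins_of (n T : nat) (w : {ffun 'I_T * 'I_n -> bool}) (t : nat) (u : 'I_n)
  : bool :=
  if insub (t.-1) is Some i then w (i, u) else false.

(* Probability (uniform over independent fair coins) that the discrete
   process run for T rounds has discrepancy at most b. *)
Definition coin_prob (R : realFieldType) (n : nat) (sched : nat -> {set {set 'I_n}})
  (x0 : 'I_n -> nat) (T : nat) (b : R) : R :=
  (#|[set w : {ffun 'I_T * 'I_n -> bool} |
        (discn (drun sched (coins_of w) x0 T))%:R <= b]|%:R
   / #|{ffun 'I_T * 'I_n -> bool}|%:R).

Definition max_deg (n : nat) (e : rel 'I_n) : nat :=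
  \max_(u < n) #|[set v | e u v]|.

(* Random matching model: a distribution D on sets of edges, supported on
   matchings, each edge in the random matching with probability >= pmin;
   rounds are independent (i.i.d. from D). *)
Definition matching_distr (R : realFieldType) (n : nat) (e : rel 'I_n)
  (D : {ffun {set {set 'I_n}} -> R}) (pmin : R) : Prop :=
  [/\ forall M, 0 <= D M,
      \sum_(M : {set {set 'I_n}}) D M = 1,
      forall M, D M != 0 -> is_matching e M &
      forall u v, e u v -> pmin <= \sum_(M : {set {set 'I_n}} | [set u; v] \in M) D M].

Definition sched_prob (R : realFieldType) (n T : nat) (D : {ffun {set {set 'I_n}} -> R})
  (Ms : {ffun 'I_T -> {set {set 'I_n}}}) : R :=
  \prod_(i < T) D (Ms i).

Definition rm_smooth_prob (R : realType) (n : nat) (D : {ffun {set {set 'I_n}} -> R})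
  (t : nat) (K eps : R) : R :=
  \sum_(Ms : {ffun 'I_t -> {set {set 'I_n}}} | `[< smoothing (sched_of Ms) 0 t K eps >])
     sched_prob D Ms.

Definition is_tau_cont_rm (R : realType) (n : nat) (D : {ffun {set {set 'I_n}} -> R})
  (K eps : R) (T : nat) : Prop :=
  1 - (n%:R)^-1 <= rm_smooth_prob D T K eps /\
  (forall t, (t < T)%N -> rm_smooth_prob D t K eps < 1 - (n%:R)^-1).

Definition rm_disc_prob (R : realType) (n : nat) (D : {ffun {set {set 'I_n}} -> R})
  (x0 : 'I_n -> nat) (T : nat) (b : R) : R :=
  \sum_(Ms : {ffun 'I_T -> {set {set 'I_n}}})
     sched_prob D Ms * coin_prob (sched_of Ms) x0 T b.

(* For a fixed sequence of matchings, averaging over the coins of one round gives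
   E[prod_u (1 + y_u)^(x_u(t))] <= prod_u (1 + (M(t) y)_u)^(x_u(t-1)), hence after T
   rounds E[(1 + s)^(x_u(T))] <= prod_v (1 + s P_vu)^(x_v(0)) with P = M(1) ... M(T).
   As [0,T] is (1,1/n)-smoothing, every entry of P is at most 2/n, so for s = n^eps/4
   and |x(0)|_1 <= n^(1-eps) this expectation is at most 2. Markov's inequality at
   k = floor(9/eps) + 1 and a union bound over the nodes show that with probability
   at least 1 - 1/n every load is below k; loads being non-negative, the discrepancy
   is then at most 9/eps. In the random matching model the smoothing event itself has
   probability at least 1 - 1/n, and (1 - 1/n)^2 >= 1 - 2/n. *)

From HB Require Import structures.
From mathcomp Require Import all_boot all_order all_algebra.
From mathcomp Require Import boolp reals exp.
From mathcomp Require Import ring lra.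
Import Order.TTheory GRing.Theory Num.Theory.
Local Open Scope ring_scope.
Set Implicit Arguments. Unset Strict Implicit.

Section Matching.
Variables (n : nat) (e : rel 'I_n) (M : {set {set 'I_n}}).
Hypothesis hM : is_matching e M.

Lemma partner_edge u : partner M u != u -> [set u; partner M u] \in M.
Proof. by rewrite /partner; case: pickP => [v /andP[_ ->]|_]; rewrite ?eqxx. Qed.

Lemma partner_eq u v : v != u -> [set u; v] \in M -> partner M u = v.
Proof.
move=> vu Muv; rewrite /partner; case: pickP => [w /andP[wu Muw]|none]; last first.
  by have:= none v; rewrite vu Muv.
case: (eqVneq w v) => // wv.
have neq_edges : [set u; w] != [set u; v].
  apply/negP => /eqP E; have : v \in [set u; w] by rewrite E set22.
  by rewrite in_set2 (negPf vu) eq_sym (negPf wv).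
have := disjointFr (hM.2 _ _ Muw Muv neq_edges) (set21 u w).
by rewrite set21.
Qed.

Lemma partnerK u : partner M (partner M u) = u.
Proof.
case: (eqVneq (partner M u) u) => [pu|pu]; first by rewrite !pu.
by apply: partner_eq; rewrite 1?eq_sym // setUC partner_edge.
Qed.

Lemma matchedE u : matched M u = (partner M u != u).
Proof.
apply/idP/idP => [/existsP[s /andP[Ms us]]|pu]; last first.
  by apply/existsP; exists [set u; partner M u]; rewrite partner_edge // set21.
have [a [b [ab _ sE]]] := hM.1 s Ms.
move: us; rewrite sE in_set2 => /orP[]/eqP ->.
  by rewrite (@partner_eq a b) 1?eq_sym // -sE.
by rewrite (@partner_eq b a) // setUC -sE.
Qed.

Lemma mmatE (R : numFieldType) u v : mmat R M u v =
  if u == v then (if partner M u == u then 1 else 2^-1)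
  else (if partner M u == v then 2^-1 else 0).
Proof.
rewrite mxE; case: (eqVneq u v) => [->|uv]; first by rewrite matchedE; case: eqP.
case: (eqVneq (partner M u) v) => [pv|pv].
  by rewrite -pv partner_edge // pv eq_sym.
by case: ifP => // Muv; move: pv; rewrite (@partner_eq u v) ?eqxx // eq_sym.
Qed.

Lemma mmat_ge0 (R : numFieldType) u v : 0 <= mmat R M u v.
Proof. by rewrite mmatE; do 2!case: ifP => _ //; rewrite invr_ge0 ler0n. Qed.

Lemma mmat_mulE (R : numFieldType) (y : 'I_n -> R) u :
  \sum_v mmat R M u v * y v =
  if partner M u == u then y u else (y u + y (partner M u)) / 2.
Proof.
rewrite (bigD1 u) //= mmatE eqxx.
case: (eqVneq (partner M u) u) => [pu|pu].
  rewrite big1 ?addr0 ?mul1r // => v vu.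
  by rewrite mmatE eq_sym (negPf vu) pu eq_sym (negPf vu) mul0r.
rewrite (bigD1 (partner M u)) //= mmatE eq_sym (negPf pu) eqxx big1 ?addr0.
  by rewrite -mulrDr mulrC.
move=> v /andP[vu vp].
by rewrite mmatE eq_sym (negPf vu) eq_sym (negPf vp) mul0r.
Qed.

Lemma mmat_row_sum (R : numFieldType) u : \sum_v mmat R M u v = 1.
Proof.
have := mmat_mulE (fun _ => 1 : R) u; under eq_bigr do rewrite mulr1.
by move=> ->; case: ifP => // _; rewrite -[1 + 1]/(2%:R) divff // pnatr_eq0.
Qed.

End Matching.

Section Schedule.
Variables (n : nat) (e : rel 'I_n) (sched : nat -> {set {set 'I_n}}).
Hypothesis hs : forall t, is_matching e (sched t).

Lemma prodM_ge0 (R : numFieldType) k u v : 0 <= prodM R sched 0 k u v.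
Proof.
elim: k u v => [|k IH] u v /=; first by rewrite mxE ler0n.
rewrite mxE; apply: sumr_ge0 => w _.
by apply: mulr_ge0; [exact: IH | exact: (mmat_ge0 (hs _))].
Qed.

Lemma prodM_row_sum (R : numFieldType) k u : \sum_v prodM R sched 0 k u v = 1.
Proof.
elim: k u => [|k IH] u /=.
  rewrite (bigD1 u) //= !mxE eqxx /= big1 ?addr0 // => v vu.
  by rewrite !mxE eq_sym (negbTE vu).
under eq_bigr do rewrite mxE.
rewrite exchange_big /=.
by under eq_bigr do rewrite -mulr_sumr (mmat_row_sum (hs _)) mulr1.
Qed.

(* Smoothing the indicator of u bounds the spread of row u of the product;
   since that row sums to 1, its largest entry exceeds the mean 1/n by at most d. *)
Lemma prodM_le_smoothing (R : realFieldType) T (d : R) u w : (0 < n)%N ->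
  smoothing sched 0 T 1 d -> prodM R sched 0 T u w <= d + n%:R^-1.
Proof.
move=> n_gt0 smooth.
pose ind : 'rV[R]_n := \row_j (if j == u then 1 else 0).
have disc_ind : disc ind <= 1.
  rewrite /disc; apply: bigmax_le => // i _; apply: bigmax_le => // j _.
  by rewrite !mxE; do 2!case: ifP => _; rewrite ?subrr ?subr0 ?sub0r ?normrN ?normr0 ?normr1.
have := smooth _ disc_ind; rewrite subn0.
set P := prodM R sched 0 T => disc_row.
have rowE j : (ind *m P) ord0 j = P u j.
  rewrite mxE (bigD1 u) //= mxE eqxx mul1r big1 ?addr0 // => i iu.
  by rewrite mxE (negbTE iu) mul0r.
have spread j : P u w - P u j <= d.
  apply: le_trans disc_row; apply: le_trans (ler_norm _) _.
  rewrite -rowE -(rowE j) /disc; apply: le_trans (le_bigmax _ _ w).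
  exact: (le_bigmax _ (fun v => `|_ - _ ord0 v|) j).
have : \sum_(j < n) (P u w - P u j) <= \sum_(j < n) d.
  by apply: ler_sum => j _; exact: spread.
have nR : 0 < n%:R :> R by rewrite ltr0n.
rewrite sumrB prodM_row_sum !sumr_const card_ord.
rewrite -[P u w *+ n]mulr_natl -[d *+ n]mulr_natl => Hle.
by rewrite -(ler_pM2l nR) mulrDr mulfV ?gt_eqF // -lerBlDr.
Qed.

End Schedule.

(* The generating-function step for one matched pair {u,v} with load s:
   the two possible outcomes of the coin are (ceil(s/2), floor(s/2)) and
   (floor(s/2), ceil(s/2)), and AM-GM gives (1+a)(1+b) <= (1+(a+b)/2)^2. *)
Lemma expr_split_half_le (R : realFieldType) (a b : R) (s : nat) : 0 <= a -> 0 <= b ->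
  (1 + a) ^+ (s./2 + odd s) * (1 + b) ^+ s./2 +
  (1 + a) ^+ s./2 * (1 + b) ^+ (s./2 + odd s) <= 2 * (1 + (a + b) / 2) ^+ s.
Proof.
move=> a0 b0; set h := s./2; set c := 1 + (a + b) / 2.
have amgm : (1 + a) * (1 + b) <= c ^+ 2.
  by rewrite /c expr2; have := sqr_ge0 (a - b); rewrite expr2; nra.
have c0 : 0 <= c by rewrite /c; lra.
have amgm_h : ((1 + a) * (1 + b)) ^+ h <= (c ^+ 2) ^+ h.
  by apply: lerXn2r; rewrite ?nnegrE ?sqr_ge0 //; apply: mulr_ge0; lra.
have := odd_double_half s; rewrite -/h; case: (odd s) => /= <-.
  rewrite -mul2n (exprD c) (exprM c) expr1 addn1 (exprSr (1 + a)) (exprSr (1 + b)).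
  rewrite exprMn in amgm_h.
  have -> : (1 + a) ^+ h * (1 + a) * (1 + b) ^+ h + (1 + a) ^+ h * ((1 + b) ^+ h * (1 + b))
     = (2 * c) * ((1 + a) ^+ h * (1 + b) ^+ h) by rewrite /c; field.
  by rewrite -mulrA; apply: ler_wpM2l => //; apply: ler_wpM2l.
rewrite -mul2n add0n addn0 (exprM c) -exprMn -mulr2n -[X in X <= _]mulr_natl.
by apply: ler_wpM2l.
Qed.

Section DiscreteStep.
Variables (n : nat) (e : rel 'I_n) (M : {set {set 'I_n}}).
Hypothesis hM : is_matching e M.
Local Notation p := (partner M).

Definition coin_owner (u : 'I_n) : 'I_n := if (u < p u)%N then u else p u.

Definition dstep_coin (x : 'I_n -> nat) (u : 'I_n) (b : bool) : nat :=
  if p u == u then x u else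
  let s := (x u + x (p u))%N in (s./2 + (odd s && (b == (u < p u)%N)))%N.

Lemma coin_ownerP u j : coin_owner u = j -> u = j \/ u = p j.
Proof.
by rewrite /coin_owner; case: ifP => _ <-; [left | right; rewrite (partnerK hM)].
Qed.

Lemma prod_coin_owner (R : comPzSemiRingType) (F : 'I_n -> R) j :
  \prod_(u | coin_owner u == j) F u =
  if p j == j then F j else if (j < p j)%N then F j * F (p j) else 1.
Proof.
have pK := partnerK hM.
case: (eqVneq (p j) j) => pj.
  rewrite (bigD1 j) /=; last by rewrite /coin_owner pj ltnn.
  rewrite big1 ?mulr1 // => u /andP[/eqP/coin_ownerP[->|]]; first by rewrite eqxx.
  by rewrite pj => ->; rewrite eqxx.
case: ltnP => jp.
  rewrite (bigD1 j) /=; last by rewrite /coin_owner jp.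
  rewrite (bigD1 (p j)) /=; last by rewrite pj /coin_owner pK ltnNge (ltnW jp) /= eqxx.
  rewrite big1 ?mulr1 // => u /andP[/andP[/eqP/coin_ownerP[]-> uj] up].
    by rewrite eqxx in uj.
  by rewrite eqxx in up.
have pj_lt : (p j < j)%N by rewrite ltn_neqAle pj jp.
rewrite big1 // => u /eqP owner_u; have [uE|uE] := coin_ownerP owner_u.
  by move: owner_u; rewrite uE /coin_owner ltnNge jp => /eqP; rewrite (negPf pj).
by move: owner_u; rewrite uE /coin_owner pK pj_lt => /eqP; rewrite (negPf pj).
Qed.

(* Grouping the nodes by the coin that decides them turns the sum over all
   2^n coin vectors into a product over coins; the owner of a matched pair
   contributes the two-outcome sum bounded by [expr_split_half_le]. *)
Lemma dstep_mgf_le (R : realFieldType) (x : 'I_n -> nat) (y : 'I_n -> R) :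
  (forall u, 0 <= y u) ->
  \sum_(c : {ffun 'I_n -> bool}) \prod_u (1 + y u) ^+ (dstep M c x u)
  <= 2 ^+ n * \prod_u (1 + \sum_v mmat R M u v * y v) ^+ (x u).
Proof.
move=> y0; have pK := partnerK hM.
pose F u b := (1 + y u) ^+ (dstep_coin x u b).
pose G u := (1 + \sum_v mmat R M u v * y v) ^+ (x u).
have F0 u b : 0 <= F u b by apply: exprn_ge0; have := y0 u; lra.
have by_owner (c : {ffun 'I_n -> bool}) : \prod_u (1 + y u) ^+ (dstep M c x u)
    = \prod_j \prod_(u | coin_owner u == j) F u (c j).
  rewrite (partition_big coin_owner xpredT) //=.
  by apply: eq_bigr => j _; apply: eq_bigr => u /eqP <-.
rewrite (eq_bigr _ (fun c _ => by_owner c)).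
rewrite -(bigA_distr_bigA (fun j b => \prod_(u | coin_owner u == j) F u b)) /=.
have -> : 2 ^+ n * \prod_u G u = \prod_j (2 * \prod_(u | coin_owner u == j) G u).
  rewrite big_split /= prodr_const card_ord; congr (_ * _).
  by rewrite (partition_big coin_owner xpredT).
apply: ler_prod => j _; apply/andP; split.
  by apply: sumr_ge0 => b _; apply: prodr_ge0.
rewrite big_bool /= !prod_coin_owner.
case: (eqVneq (p j) j) => pj.
  rewrite /F /dstep_coin /G pj eqxx (mmat_mulE hM) pj eqxx -mulr2n -mulr_natl.
  by rewrite mulr1 mulr_natl.
case: ltnP => jp; last by rewrite mulr1.
have jpF : (j == p j) = false by rewrite eq_sym (negPf pj).
have pjF : (p j < j)%N = false by rewrite ltnNge ltnW.
rewrite /F /G /dstep_coin (negPf pj) pK jpF jp pjF /= !(mmat_mulE hM) (negPf pj) pK jpF.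
rewrite (addrC (y (p j))) -exprD (addnC (x (p j))) /= andbT andbF addn0.
exact: expr_split_half_le.
Qed.

End DiscreteStep.

Section CoinsSnoc.
Variables (n T : nat).

Definition coins_snoc (w : {ffun 'I_T * 'I_n -> bool}) (c : {ffun 'I_n -> bool})
  : {ffun 'I_T.+1 * 'I_n -> bool} :=
  [ffun q : 'I_T.+1 * 'I_n =>
     if insub (nat_of_ord q.1) is Some i then w (i, q.2) else c q.2].

Definition coins_init (w : {ffun 'I_T.+1 * 'I_n -> bool}) : {ffun 'I_T * 'I_n -> bool} :=
  [ffun q : 'I_T * 'I_n => w (widen_ord (leqnSn T) q.1, q.2)].

Definition coins_last (w : {ffun 'I_T.+1 * 'I_n -> bool}) : {ffun 'I_n -> bool} :=
  [ffun u => w (ord_max, u)].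

Lemma sum_coins_snoc (R : nmodType) (f : {ffun 'I_T.+1 * 'I_n -> bool} -> R) :
  \sum_w f w =
  \sum_(w : {ffun 'I_T * 'I_n -> bool}) \sum_(c : {ffun 'I_n -> bool}) f (coins_snoc w c).
Proof.
rewrite pair_big /= (reindex (fun q => coins_snoc q.1 q.2)) //=.
apply: onW_bij; exists (fun w => (coins_init w, coins_last w)).
  move=> [w c] /=; congr pair; apply/ffunP => [[i u]]; rewrite !ffunE /=.
    by rewrite (_ : insub (nat_of_ord i) = Some i) // valK.
  by rewrite insubF //= ltnn.
move=> w; apply/ffunP => [[i u]]; rewrite !ffunE /=.
case: insubP => [k _ kE|iT]; rewrite ?ffunE; congr (w (_, _)); apply: val_inj => //=.
by apply/eqP; rewrite eqn_leq leqNgt iT -ltnS ltn_ord.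
Qed.

Lemma coins_of_snoc_lt w c t u :
  (0 < t <= T)%N -> coins_of (coins_snoc w c) t u = coins_of w t u.
Proof.
case/andP => t0 tT; rewrite /coins_of; case: insubP => [i _ iE|] /=.
  rewrite ffunE /= iE; case: insubP => // /negP.
  by rewrite prednK.
by rewrite ltnS (leq_trans (leq_pred t) tT).
Qed.

Lemma coins_of_snoc_last w c u : coins_of (coins_snoc w c) T.+1 u = c u.
Proof.
rewrite /coins_of; case: insubP => [i _ iE|] /=; last by rewrite ltnSn.
by rewrite ffunE /= iE insubF //= ltnn.
Qed.

End CoinsSnoc.

Lemma drun_ext n (sched : nat -> {set {set 'I_n}}) c1 c2 x0 T :
  (forall t u, (0 < t <= T)%N -> c1 t u = c2 t u) ->
  drun sched c1 x0 T = drun sched c2 x0 T.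
Proof.
elim: T => [//|T IH] eq_c /=.
rewrite IH => [|t u /andP[t0 tT]]; last by apply: eq_c; rewrite t0 leqW.
by congr dstep; apply: funext => u; apply: eq_c; rewrite /= leqnn.
Qed.

Lemma drun_coins_snoc n (sched : nat -> {set {set 'I_n}}) x0 T
    (w : {ffun 'I_T * 'I_n -> bool}) (c : {ffun 'I_n -> bool}) :
  drun sched (coins_of (coins_snoc w c)) x0 T.+1 =
  dstep (sched T.+1) c (drun sched (coins_of w) x0 T).
Proof.
rewrite /= (@drun_ext _ _ _ (coins_of w)) => [|t u]; last exact: coins_of_snoc_lt.
by congr dstep; apply: funext => u; apply: coins_of_snoc_last.
Qed.

Section ScheduleMgf.
Variables (n : nat) (e : rel 'I_n) (sched : nat -> {set {set 'I_n}}).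
Hypothesis hs : forall t, is_matching e (sched t).

(* Iterating [dstep_mgf_le] backwards in time: y is pulled back through
   each matching matrix, ending with P y for P the product of all of them. *)
Lemma drun_mgf_le (R : realFieldType) T (x0 : 'I_n -> nat) (y : 'I_n -> R) :
  (forall u, 0 <= y u) ->
  \sum_(w : {ffun 'I_T * 'I_n -> bool})
     \prod_u (1 + y u) ^+ (drun sched (coins_of w) x0 T u)
  <= 2 ^+ (T * n) * \prod_u (1 + \sum_v prodM R sched 0 T u v * y v) ^+ (x0 u).
Proof.
elim: T y => [|T IH] y y0.
  rewrite (eq_bigr (fun _ => \prod_u (1 + y u) ^+ x0 u)) // sumr_const card_ffun.
  rewrite card_prod !card_ord /= mul0n expn0 expr0 mulr1n mul1r.
  rewrite le_eqVlt; apply/orP; left; apply/eqP; apply: eq_bigr => u _ /=.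
  rewrite (bigD1 u) //= mxE eqxx mul1r big1 ?addr0 // => v vu.
  by rewrite mxE eq_sym (negbTE vu) mul0r.
rewrite sum_coins_snoc.
rewrite (eq_bigr (fun w => \sum_(c : {ffun 'I_n -> bool})
  \prod_u (1 + y u) ^+ dstep (sched T.+1) c (drun sched (coins_of w) x0 T) u)); last first.
  by move=> w _; apply: eq_bigr => c _; rewrite drun_coins_snoc.
pose My v := \sum_w mmat R (sched T.+1) v w * y w.
have My0 v : 0 <= My v.
  by apply: sumr_ge0 => w _; apply: mulr_ge0; [exact: (mmat_ge0 (hs _)) | exact: y0].
apply: le_trans (_ : \sum_(w : {ffun 'I_T * 'I_n -> bool}) 2 ^+ n *
     \prod_u (1 + My u) ^+ (drun sched (coins_of w) x0 T u) <= _).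
  by apply: ler_sum => w _; exact: (dstep_mgf_le (hs _)).
rewrite -mulr_sumr.
apply: le_trans (_ : 2 ^+ n * (2 ^+ (T * n) *
    \prod_u (1 + \sum_v prodM R sched 0 T u v * My v) ^+ (x0 u)) <= _).
  by apply: ler_wpM2l; [exact: exprn_ge0 | exact: IH].
rewrite mulrA -exprD -mulSn le_eqVlt; apply/orP; left; apply/eqP.
congr (_ * _); apply: eq_bigr => u _; congr (_ ^+ _); congr (_ + _).
rewrite /My; under eq_bigr do rewrite mulr_sumr.
rewrite exchange_big /=; apply: eq_bigr => w _; rewrite mxE mulr_suml.
by apply: eq_bigr => v _; rewrite mulrA.
Qed.

Lemma node_mgf_le (R : realFieldType) T (x0 : 'I_n -> nat) (t q : R) u :
  0 <= t -> (forall v, prodM R sched 0 T v u <= q) ->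
  \sum_(w : {ffun 'I_T * 'I_n -> bool}) (1 + t) ^+ (drun sched (coins_of w) x0 T u)
  <= 2 ^+ (T * n) * (1 + t * q) ^+ (\sum_v x0 v)%N.
Proof.
move=> t0 col_le; pose y v : R := if v == u then t else 0.
have y0 v : 0 <= y v by rewrite /y; case: ifP.
have prod_y (X : 'I_n -> nat) : \prod_v (1 + y v) ^+ X v = (1 + t) ^+ X u.
  rewrite (bigD1 u) //= /y eqxx big1 ?mulr1 // => v vu.
  by rewrite (negbTE vu) addr0 expr1n.
have := drun_mgf_le T x0 y0.
rewrite (eq_bigr _ (fun w _ => prod_y (drun sched (coins_of w) x0 T))).
move/le_trans; apply; apply: ler_wpM2l; first exact: exprn_ge0.
rewrite -prodrXr; apply: ler_prod => v _.
have Py_ge0 : 0 <= 1 + \sum_v' prodM R sched 0 T v v' * y v'.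
  apply: addr_ge0 => //; apply: sumr_ge0 => v' _.
  by apply: mulr_ge0; [exact: prodM_ge0 | exact: y0].
have Py_le : 1 + \sum_v' prodM R sched 0 T v v' * y v' <= 1 + t * q.
  rewrite lerD2l (bigD1 u) //= big1 ?addr0 => [|v' vu]; last by rewrite /y (negbTE vu) mulr0.
  by rewrite /y eqxx mulrC ler_wpM2l.
rewrite exprn_ge0 //=; apply: lerXn2r => //; rewrite nnegrE //.
exact: le_trans Py_le.
Qed.

End ScheduleMgf.

Lemma expr1D_mul_le1 (R : realFieldType) (a : R) m :
  0 <= a -> (1 + a) ^+ m * (1 - m%:R * a) <= 1.
Proof.
move=> a0; elim: m => [|m IH]; first by rewrite expr0 mul0r subr0 mul1r.
have P0 : 0 <= (1 + a) ^+ m by apply: exprn_ge0; lra.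
apply: le_trans IH; rewrite exprS -natr1.
set P := (1 + a) ^+ m in P0 *; set mm := m%:R.
have m0 : 0 <= mm by rewrite /mm ler0n.
have : 0 <= P * ((mm + 1) * (a * a)) by rewrite !mulr_ge0 //; lra.
nra.
Qed.

Lemma expr1D_le2 (R : realFieldType) (a : R) m :
  0 <= a -> m%:R * a <= 2^-1 -> (1 + a) ^+ m <= 2.
Proof.
move=> a0 ma; have := expr1D_mul_le1 m a0.
have : 0 <= (1 + a) ^+ m by apply: exprn_ge0; lra.
set P := (1 + a) ^+ m; set q := m%:R * a in ma *; nra.
Qed.

(* Markov's inequality for q ^+ X combined with a union bound over nodes. *)
Lemma card_exceed_le (R : realFieldType) (W : finType) n (X : W -> 'I_n -> nat)
    (q : R) (k : nat) :
  1 <= q -> #|[set w | [exists u, k <= X w u]%N]|%:R * q ^+ k <= \sum_u \sum_w q ^+ X w u.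
Proof.
move=> q1; have q0 : 0 <= q by apply: le_trans q1.
rewrite -sum1_card natr_sum mulr_suml big_mkcond exchange_big /=.
apply: ler_sum => w _; rewrite inE.
case: existsP => [[u ku]|_]; last by apply: sumr_ge0 => u _; exact: exprn_ge0.
rewrite mul1r (bigD1 u) //=; apply: le_trans (ler_weXn2l q1 ku) _.
by rewrite lerDl; apply: sumr_ge0 => v _; exact: exprn_ge0.
Qed.

Lemma discn_le n (x : 'I_n -> nat) b : (forall u, x u <= b)%N -> (discn x <= b)%N.
Proof.
move=> xb; apply/bigmax_leqP => u _; apply/bigmax_leqP => v _.
exact: leq_trans (leq_subr _ _) (xb u).
Qed.

Lemma card_ratio_ge (R : realFieldType) (W : finType) (A B : {set W}) (r : R) :
  (0 < #|W|)%N -> ~: A \subset B -> #|B|%:R <= #|W|%:R * r ->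
  1 - r <= #|A|%:R / #|W|%:R.
Proof.
move=> W_gt0 AB Br; have WR : 0 < #|W|%:R :> R by rewrite ltr0n.
have cA_le : #|~: A|%:R <= #|W|%:R * r :> R.
  by apply: le_trans Br; rewrite ler_nat subset_leq_card.
have := cardsC A; move/(congr1 (fun m => m%:R : R)); rewrite natrD => cardW.
rewrite ler_pdivlMr // mulrBl mul1r mulrC; lra.
Qed.

Lemma load_mgf_le2 (R : realType) (eps : R) n m : (0 < n)%N ->
  m%:R <= n%:R `^ (1 - eps) ->
  (1 + n%:R `^ eps / 4 * (n%:R^-1 + n%:R^-1)) ^+ m <= 2.
Proof.
move=> n_gt0 Hm; have nR : 0 < n%:R :> R by rewrite ltr0n.
set N := n%:R `^ eps; have N0 : 0 < N by apply: powR_gt0.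
have mN : m%:R * N <= n%:R.
  have <- : n%:R `^ (1 - eps) * N = n%:R.
    by rewrite /N -powRD ?subrK ?powRr1 ?ler0n // pnatr_eq0 -lt0n n_gt0 implybT.
  by apply: ler_wpM2r => //; apply: ltW.
apply: expr1D_le2; first by rewrite mulr_ge0 ?addr_ge0 ?invr_ge0 ?ler0n ?divr_ge0 ?ltW.
have -> : m%:R * (N / 4 * (n%:R^-1 + n%:R^-1)) = (m%:R * N / n%:R) / 2.
  by field; rewrite pnatr_eq0 -lt0n n_gt0.
have : m%:R * N / n%:R <= 1 by rewrite ler_pdivrMr // mul1r.
lra.
Qed.

Lemma exceed_weight_ge (R : realType) (eps : R) n k : 0 < eps ->
  3 <= eps * k%:R -> (2 * 4 ^ k <= n)%N ->
  2 * n%:R ^+ 2 <= (1 + n%:R `^ eps / 4) ^+ k.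
Proof.
move=> eps0 ek Hn.
have n_gt0 : (0 < n)%N by apply: leq_trans Hn; rewrite muln_gt0 expn_gt0.
set N := n%:R `^ eps; have N0 : 0 < N by apply: powR_gt0; rewrite ltr0n.
have NK : n%:R ^+ 3 <= N ^+ k.
  rewrite -(powR_mulrn k (ltW N0)) /N -powRrM -(powR_mulrn 3 (ler0n R n)).
  by apply: ler_powR => //; rewrite ler1n.
have K0 : 0 < 4 ^+ k :> R by rewrite exprn_gt0.
have hn : 2 * 4 ^+ k <= n%:R :> R by move: Hn; rewrite -(ler_nat R) natrM natrX.
apply: le_trans (_ : (N / 4) ^+ k <= _); last first.
  by apply: lerXn2r; rewrite ?nnegrE ?addr_ge0 ?divr_ge0 ?ltW //; lra.
rewrite expr_div_n ler_pdivlMr //; apply: le_trans NK.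
have -> : 2 * n%:R ^+ 2 * 4 ^+ k = n%:R ^+ 2 * (2 * 4 ^+ k) :> R by ring.
by rewrite (exprSr _ 2); apply: ler_wpM2l; rewrite ?exprn_ge0.
Qed.

Lemma coin_prob_ge (R : realType) (eps : R) n (e : rel 'I_n)
    (sched : nat -> {set {set 'I_n}}) (x0 : 'I_n -> nat) T :
  0 < eps -> (forall t, is_matching e (sched t)) ->
  (2 * 4 ^ (Num.truncn (9 / eps)).+1 <= n)%N ->
  (\sum_(u < n) x0 u)%:R <= n%:R `^ (1 - eps) ->
  smoothing sched 0 T (1 : R) n%:R^-1 ->
  1 - n%:R^-1 <= coin_prob sched x0 T (9 / eps).
Proof.
set k := (Num.truncn (9 / eps)).+1 => eps0 hs Hn Hm smooth.
have n_gt0 : (0 < n)%N by apply: leq_trans Hn; rewrite muln_gt0 expn_gt0.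
have nR : 0 < n%:R :> R by rewrite ltr0n.
have ek : 3 <= eps * k%:R.
  by have := truncnS_gt (9 / eps); rewrite -/k ltr_pdivrMr // mulrC; lra.
set X := fun w : {ffun 'I_T * 'I_n -> bool} => drun sched (coins_of w) x0 T.
set t := n%:R `^ eps / 4.
have t0 : 0 <= t by rewrite /t divr_ge0 // powR_ge0.
set C : R := 2 ^+ (T * n).
set B := [set w | [exists u, k <= X w u]%N].
have tail : #|B|%:R * (1 + t) ^+ k <= n%:R * (C * 2).
  apply: le_trans (card_exceed_le _ _ _) _; first by lra.
  apply: le_trans (_ : \sum_(u < n) (C * 2) <= _); last first.
    by rewrite sumr_const card_ord mulr_natl.
  apply: ler_sum => u _.
  have col_le v : prodM R sched 0 T v u <= n%:R^-1 + n%:R^-1.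
    exact: prodM_le_smoothing.
  apply: le_trans (node_mgf_le hs x0 t0 col_le) _.
  by apply: ler_wpM2l; [exact: exprn_ge0 | exact: load_mgf_le2].
apply: (@card_ratio_ge _ _ _ B).
- by rewrite card_ffun expn_gt0 card_bool.
- apply/subsetP => w; rewrite !inE; apply: contraR => /existsPn small.
  have : (discn (X w) <= Num.truncn (9 / eps))%N.
    by apply: discn_le => u; rewrite -ltnS ltnNge small.
  rewrite -(ler_nat R) => /le_trans; apply.
  by rewrite truncn_le divr_ge0 // ltW.
have -> : #|{ffun 'I_T * 'I_n -> bool}|%:R = C :> R.
  by rewrite card_ffun card_prod !card_ord card_bool natrX.
have n2 : 0 < 2 * n%:R ^+ 2 :> R by rewrite mulr_gt0 ?exprn_gt0.
rewrite -(ler_pM2r n2); apply: le_trans (_ : #|B|%:R * (1 + t) ^+ k <= _).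
  by apply: ler_wpM2l => //; exact: exceed_weight_ge.
have -> : C * n%:R^-1 * (2 * n%:R ^+ 2) = n%:R * (C * 2).
  by field; rewrite gt_eqF.
exact: tail.
Qed.

Lemma rm_disc_prob_ge (R : realType) n (e : rel 'I_n) (D : {ffun {set {set 'I_n}} -> R})
    (x0 : 'I_n -> nat) T (K d b z : R) :
  (forall M, 0 <= D M) -> (forall M, D M != 0 -> is_matching e M) -> 0 <= z ->
  (forall sched, (forall t, is_matching e (sched t)) -> smoothing sched 0 T K d ->
     z <= coin_prob sched x0 T b) ->
  z * rm_smooth_prob D T K d <= rm_disc_prob D x0 T b.
Proof.
move=> D0 D_match z0 coin_ge.
rewrite /rm_smooth_prob /rm_disc_prob big_mkcond mulr_sumr; apply: ler_sum => Ms _.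
have sp0 : 0 <= sched_prob D Ms by apply: prodr_ge0.
have cp0 : 0 <= coin_prob (sched_of Ms) x0 T b by rewrite /coin_prob divr_ge0.
case: asboolP => [smooth|_]; last by rewrite mulr0 mulr_ge0.
case: (eqVneq (sched_prob D Ms) 0) => [->|sp_neq0]; first by rewrite mulr0 mul0r.
rewrite mulrC; apply: ler_wpM2l => //; apply: coin_ge smooth => t.
rewrite /sched_of; case: insubP => [i _ _|_]; last by split => [s|s s']; rewrite inE.
apply: D_match; apply/negP => /eqP Di; move: sp_neq0.
by rewrite /sched_prob (bigD1 i) //= Di mul0r eqxx.
Qed.

Unset Implicit Arguments.

Theorem corollary3p4 (R : realType) (eps : R) (heps : 0 < eps) :
  (* balancing circuit model *)
  (exists n0 : nat, forall (n : nat) (e : rel 'I_n),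
     (n0 <= n)%N -> simple_graph e ->
     forall (Ms : seq {set {set 'I_n}}), (0 < size Ms)%N ->
     (forall M, M \in Ms -> is_matching e M) ->
     forall (x0 : 'I_n -> nat),
     (\sum_(u < n) x0 u)%:R <= (n%:R) `^ (1 - eps) ->
     forall T : nat, is_tau_cont (bc_sched Ms) (1 : R) (n%:R)^-1 T ->
     1 - 2 / n%:R <= coin_prob (bc_sched Ms) x0 T (9 / eps))
  /\
  (* random matching model, p_min >= c / Delta for a constant c > 0 *)
  (forall c : R, 0 < c ->
   exists n0 : nat, forall (n : nat) (e : rel 'I_n),
     (n0 <= n)%N -> simple_graph e ->
     forall (D : {ffun {set {set 'I_n}} -> R}),
     matching_distr e D (c / (max_deg e)%:R) ->
     forall (x0 : 'I_n -> nat),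
     (\sum_(u < n) x0 u)%:R <= (n%:R) `^ (1 - eps) ->
     forall T : nat, is_tau_cont_rm D 1 (n%:R)^-1 T ->
     1 - 2 / n%:R <= rm_disc_prob D x0 T (9 / eps)).
Proof.
pose n0 := (2 * 4 ^ (Num.truncn (9 / eps)).+1)%N.
have inv_ge0 n : 0 <= n%:R^-1 :> R by rewrite invr_ge0 ler0n.
split.
  exists n0 => n e Hn _ Ms Ms_gt0 Ms_match x0 Hm T [smooth _].
  have hs t : is_matching e (bc_sched Ms t) by apply: Ms_match; rewrite mem_nth ?ltn_pmod.
  apply: le_trans (coin_prob_ge heps hs Hn Hm smooth).
  by have := inv_ge0 n; set w := n%:R^-1; lra.
move=> c _; exists n0 => n e Hn _ D [D0 _ D_match _] x0 Hm T [smooth _].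
have z0 : 0 <= 1 - n%:R^-1 :> R.
  by rewrite subr_ge0 invf_le1 ?ler1n ?ltr0n; apply: leq_trans Hn; rewrite muln_gt0 expn_gt0.
apply: le_trans (rm_disc_prob_ge D0 D_match z0
  (fun sched hs => coin_prob_ge heps hs Hn Hm)).
apply: le_trans (_ : (1 - n%:R^-1) * (1 - n%:R^-1) <= _); last exact: ler_wpM2l.
by have := inv_ge0 n; set w := n%:R^-1; nra.
Qed.
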